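(* Let $A$ be a ring, $\delta=(\delta_1,\ldots,\delta_n)$ an $n$-tuple of pairwise commuting derivations of $A$, $d_i\in\mathbb{N}\cup\{\infty\}$, $I=\{\alpha\in\mathbb{N}^n\mid\alpha_i\le d_i\ \forall i\}$, and let $\{x^{[\alpha]}\mid\alpha\in I\}$ be a $\delta$-descent. Let $\{x'^{[\alpha]}\mid\alpha\in I\}\subseteq A$. The following are equivalent: (1) $\{x'^{[\alpha]}\mid\alpha\in I\}$ is a $\delta$-descent; (2) $x'^{[0]}=1$ and there are elements $\lambda_\gamma\in A^\delta$ ($0\neq\gamma\in I$) such that $x'^{[\alpha]}=x^{[\alpha]}+\sum_{0\neq\beta\le\alpha}\lambda_\beta x^{[\alpha-\beta]}$ for every $0\neq\alpha\in I$; (3) $x'^{[0]}=1$ and there are elements $\mu_\gamma\in A^\delta$ ($0\neq\gamma\in I$) such that $x'^{[\alpha]}=x^{[\alpha]}+\sum_{0\neq\beta\le\alpha}x^{[\alpha-\beta]}\mu_\beta$ for every $0\neq\alpha\in I$.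
   Context: $A^\delta=\bigcap_i\ker\delta_i$; $\beta\le\alpha$ means $\beta_i\le\alpha_i$ for all $i$; $\delta^\alpha=\delta_1^{\alpha_1}\cdots\delta_n^{\alpha_n}$. A family $\{y^{[\alpha]}\mid\alpha\in I\}$ is a $\delta$-descent if $y^{[0]}=1$ and $\delta^\alpha(y^{[\beta]})=y^{[\beta-\alpha]}$ for all $\alpha\in\mathbb{N}^n$, $\beta\in I$, where $y^{[\gamma]}:=0$ for $\gamma\notin\mathbb{N}^n$. *)

From HB Require Import structures.
From mathcomp Require Import all_boot all_order all_algebra.
Set Implicit Arguments. Unset Strict Implicit. Unset Printing Implicit Defensive.
Import GRing.Theory.
Local Open Scope ring_scope.

Definition mi (n : nat) := {ffun 'I_n -> nat}.

Definition mzero n : mi n := [ffun _ => 0%N].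

Definition mle n (b a : mi n) : bool := [forall i, (b i <= a i)%N].

(* componentwise difference (only used when b <= a) *)
Definition msub n (a b : mi n) : mi n := [ffun i => (a i - b i)%N].

Definition mnorm n (a : mi n) : nat := (\sum_(i < n) a i)%N.

(* The (duplicate-free) list of all beta in N^n with beta <= alpha. *)
Definition lowerset n (a : mi n) : seq (mi n) :=
  [seq b <- [seq ([ffun i => nat_of_ord (c i)] : mi n)
               | c : {ffun 'I_n -> 'I_(mnorm a).+1} <- enum {ffun 'I_n -> 'I_(mnorm a).+1}]
     | mle b a].

(* The index set I = {alpha | alpha_i <= d_i}, with d_i = None meaning infinity. *)
Definition inI n (d : 'I_n -> option nat) (a : mi n) : bool :=
  [forall i, if d i is Some k then (a i <= k)%N else true].

Definition is_derivation (A : pzRingType) (D : A -> A) : Prop :=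
  (forall a b, D (a + b) = D a + D b) /\ (forall a b, D (a * b) = D a * b + a * D b).

Definition dpow (A : pzRingType) n (delta : 'I_n -> A -> A) (a : mi n) (x : A) : A :=
  foldr (fun i y => iter (a i) (delta i) y) x (enum 'I_n).

Definition is_const (A : pzRingType) n (delta : 'I_n -> A -> A) (x : A) : Prop :=
  forall i, delta i x = 0.

(* {y^[alpha] | alpha in I} is a delta-descent; y^[gamma] := 0 for gamma not in N^n,
   i.e. delta^alpha y^[beta] = 0 unless alpha <= beta. *)
Definition is_descent (A : pzRingType) n (delta : 'I_n -> A -> A)
  (d : 'I_n -> option nat) (y : mi n -> A) : Prop :=
  y (mzero n) = 1 /\
  forall (a b : mi n), inI d b ->
    dpow delta a (y b) = if mle a b then y (msub b a) else 0.

From mathcomp Require Import all_boot all_order all_algebra zify.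
Import GRing.Theory.
Local Open Scope ring_scope.
Set Implicit Arguments. Unset Strict Implicit.

(* A family y with y^[0] = 1 is a descent iff every single derivation lowers
   the index by one: delta_i y^[b] = y^[b - e_i].  Given descents x and x',
   the equations x'^[a] = x^[a] + sum_(0 != b <= a) lam_b x^[a - b] form a
   triangular system whose diagonal coefficient is x^[0] = 1, so they define
   the lam_a recursively in |a|.  Applying delta_i to the equation for a and
   subtracting the equation for a - e_i leaves delta_i lam_a = 0, by induction
   on |a|.  Conversely, when the lam are constants, delta_i passes through the
   sum and shifts every index, so x' again lowers indices.  Left and right
   coefficients only differ in the side of the product, so both are handled
   by one argument about a delta-equivariant scaling m. *)

Section Derivation.
Variables (A : pzRingType) (D : A -> A).
Hypothesis hD : is_derivation D.

Lemma derivation0 : D 0 = 0.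
Proof.
case: hD => Dadd _; apply: (@addrI _ (D 0)).
by rewrite addr0 -Dadd addr0.
Qed.

Lemma derivation1 : D 1 = 0.
Proof.
case: hD => _ Dmul; apply: (@addrI _ (D 1)).
by rewrite addr0 -{3}(mulr1 1) Dmul mulr1 mul1r.
Qed.

Lemma derivationB a b : D (a - b) = D a - D b.
Proof.
case: hD => Dadd _; rewrite Dadd; congr (_ + _); apply/eqP.
by rewrite -addr_eq0 addrC -Dadd subrr derivation0.
Qed.

Lemma derivation_sum (I : Type) (s : seq I) (P : pred I) (F : I -> A) :
  D (\sum_(c <- s | P c) F c) = \sum_(c <- s | P c) D (F c).
Proof. by case: hD => Dadd _; apply: (big_morph D Dadd derivation0). Qed.

Lemma iter_derivation0 k : iter k D 0 = 0.
Proof. by elim: k => //= k ->; rewrite derivation0. Qed.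

End Derivation.

Section MultiIndex.
Variable n : nat.
Implicit Types (a b c : mi n) (i : 'I_n).

Definition mupd a i (v : nat) : mi n := [ffun j => if j == i then v else a j].

Lemma mupd_eq a i v : mupd a i v i = v.
Proof. by rewrite ffunE eqxx. Qed.

Lemma mupd_id a i : mupd a i (a i) = a.
Proof. by apply/ffunP => j; rewrite ffunE; case: eqP => // ->. Qed.

Lemma mupd_mupd a i v w : mupd (mupd a i v) i w = mupd a i w.
Proof. by apply/ffunP => j; rewrite !ffunE; case: eqP. Qed.

Lemma mleP b a : reflect (forall i, (b i <= a i)%N) (mle b a).
Proof. exact: forallP. Qed.

Lemma mle_refl a : mle a a.
Proof. exact/mleP. Qed.

Lemma mle_trans a b c : mle a b -> mle b c -> mle a c.
Proof. by move=> /mleP ab /mleP bc; apply/mleP => i; apply: leq_trans (ab i) (bc i). Qed.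

Lemma mle_mzero c : mle c (mzero n) -> c = mzero n.
Proof.
by move=> /mleP c0; apply/ffunP => j; apply/eqP; move: (c0 j); rewrite !ffunE leqn0.
Qed.

Lemma mle_mupd a i v : (v <= a i)%N -> mle (mupd a i v) a.
Proof. by move=> va; apply/mleP => j; rewrite ffunE; case: eqP => [->|]. Qed.

Lemma msubxx a : msub a a = mzero n.
Proof. by apply/ffunP => j; rewrite !ffunE subnn. Qed.

Lemma mle_msub a c : mle (msub a c) a.
Proof. by apply/mleP => j; rewrite ffunE leq_subr. Qed.

Lemma inI_mle (d : 'I_n -> option nat) b c : inI d b -> mle c b -> inI d c.
Proof.
move=> /forallP Ib /mleP cb; apply/forallP => j; move: (Ib j) (cb j).
by case: (d j) => // k bk /leq_trans; apply.
Qed.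

Lemma mnorm_ltn b a : mle b a -> b != a -> (mnorm b < mnorm a)%N.
Proof.
move=> /mleP ba; apply: contraNT; rewrite -leqNgt => ab.
apply/eqP/ffunP => i; apply/eqP; rewrite eqn_leq ba /=.
apply: contraLR ab; rewrite -!ltnNge => lt_i.
rewrite /mnorm (bigD1 i) //= [X in (_ < X)%N](bigD1 i) //= -addSn.
by rewrite leq_add // leq_sum.
Qed.

Lemma mem_lowerset a b : (b \in lowerset a) = mle b a.
Proof.
rewrite mem_filter; case ba: (mle b a) => //=.
apply/mapP; exists [ffun i => (inord (b i) : 'I_(mnorm a).+1)]; first by rewrite mem_enum.
apply/ffunP => i; rewrite !ffunE inordK // ltnS (leq_trans (mleP _ _ ba i)) //.
by rewrite /mnorm (bigD1 i) //= leq_addr.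
Qed.

Lemma lowerset_uniq a : uniq (lowerset a).
Proof.
apply: filter_uniq; rewrite map_inj_uniq ?enum_uniq // => c1 c2 /ffunP eq12.
by apply/ffunP => i; apply: val_inj; move: (eq12 i); rewrite !ffunE.
Qed.

Lemma perm_lowerset_mle a b : mle b a ->
  perm_eq [seq c <- lowerset a | mle c b] (lowerset b).
Proof.
move=> ba; apply: uniq_perm => [||c].
- exact: filter_uniq (lowerset_uniq a).
- exact: lowerset_uniq.
- rewrite mem_filter !mem_lowerset; case cb: (mle c b) => //=.
  exact: mle_trans cb ba.
Qed.

Lemma mle_mupd_pred c a i : mle c a -> (0 < a i)%N ->
  mle c (mupd a i (a i).-1) = (c i < a i)%N.
Proof.
move=> /mleP ca ai_gt0; apply/mleP/idP => [/(_ i)|ci_lt j]; first by rewrite mupd_eq; lia.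
by rewrite ffunE; case: eqP => [->|_] //; lia.
Qed.

Lemma msub_mupd_pred a c i : (c i < a i)%N ->
  mupd (msub a c) i (msub a c i).-1 = msub (mupd a i (a i).-1) c.
Proof. by move=> ci_lt; apply/ffunP => j; rewrite !ffunE; case: eqP => [->|_] //; lia. Qed.

End MultiIndex.

Section StepDescent.
Variables (A : pzRingType) (n : nat) (delta : 'I_n -> A -> A) (d : 'I_n -> option nat).
Hypothesis hder : forall i, is_derivation (delta i).

Definition is_step_descent (y : mi n -> A) : Prop :=
  forall i b, inI d b ->
    delta i (y b) = if (0 < b i)%N then y (mupd b i (b i).-1) else 0.

Variable y : mi n -> A.
Hypothesis hy : is_step_descent y.

Lemma iter_step_descent i k c : inI d c ->
  iter k (delta i) (y c) = if (k <= c i)%N then y (mupd c i (c i - k)) else 0.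
Proof.
move=> Ic; elim: k => [|k IHk]; first by rewrite /= subn0 mupd_id.
rewrite iterS IHk; case: (leqP k (c i)) => [_|lt_ck]; last first.
  by rewrite derivation0 // ltnNge ltnW.
rewrite hy ?(inI_mle Ic) ?mle_mupd ?leq_subr // mupd_eq mupd_mupd subn_gt0.
by case: ltnP => // lt_kc; congr (y (mupd _ _ _)); lia.
Qed.

Lemma foldr_step_descent (a b : mi n) (s : seq 'I_n) : inI d b -> uniq s ->
  foldr (fun j z => iter (a j) (delta j) z) (y b) s =
  if all (fun j => a j <= b j)%N s
  then y [ffun j => if j \in s then (b j - a j)%N else b j] else 0.
Proof.
move=> Ib; elim: s => [|i s IHs] /=.
  by move=> _; congr y; apply/ffunP => j; rewrite ffunE.
case/andP=> i_notin_s uniq_s; rewrite IHs //.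
case: (all _ s); last by rewrite iter_derivation0 // andbF.
rewrite iter_step_descent ?(inI_mle Ib) //; last first.
  by apply/mleP => j; rewrite ffunE; case: (_ \in _) => //; apply: leq_subr.
rewrite ffunE (negbTE i_notin_s) andbT; case: leqP => // _.
by congr y; apply/ffunP => j; rewrite !ffunE inE; case: eqP => [->|].
Qed.

End StepDescent.

Lemma descentP (A : pzRingType) n (delta : 'I_n -> A -> A) (d : 'I_n -> option nat)
    (y : mi n -> A) :
  (forall i, is_derivation (delta i)) ->
  is_descent delta d y <-> y (mzero n) = 1 /\ is_step_descent delta d y.
Proof.
move=> hder; split=> [[y0 hy]|[y0 hy]]; split=> //.
- move=> i b Ib; pose e : mi n := [ffun j => (j == i) : nat].
  have dpow_e z : dpow delta e z = delta i z.
    have -> : delta i z = iter (count_mem i (enum 'I_n)) (delta i) z.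
      by rewrite count_uniq_mem ?enum_uniq ?mem_enum.
    rewrite /dpow.
    by elim: (enum 'I_n) => //= j s ->; rewrite ffunE; case: eqP => [->|].
  rewrite -dpow_e hy //.
  have -> : mle e b = (0 < b i)%N.
    apply/mleP/idP => [/(_ i)|bi_gt0 j]; first by rewrite ffunE eqxx.
    by rewrite ffunE; case: eqP => [->|].
  by case: ifP => // _; congr y; apply/ffunP => j; rewrite !ffunE; case: eqP => [->|]; lia.
- move=> a b Ib; rewrite /dpow (foldr_step_descent hder hy) ?enum_uniq //.
  have -> : all (fun j => a j <= b j)%N (enum 'I_n) = mle a b.
    by apply/allP/mleP => ab j => [|_]; apply: ab; rewrite ?mem_enum.
  by case: ifP => // _; congr y; apply/ffunP => j; rewrite !ffunE mem_enum.
Qed.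

Section ConstantTwist.
Variables (A : pzRingType) (n : nat) (delta : 'I_n -> A -> A) (d : 'I_n -> option nat).
Variables (x : mi n -> A) (m : A -> A -> A).
Hypothesis hder : forall i, is_derivation (delta i).
Hypothesis hx0 : x (mzero n) = 1.
Hypothesis hx : is_step_descent delta d x.
Hypothesis hm0 : forall l, m l 0 = 0.
Hypothesis hm1 : forall l, m l 1 = l.
Hypothesis hm_const : forall l z i, is_const delta l -> delta i (m l z) = m l (delta i z).

Definition twist_sum (lam : mi n -> A) (P : pred (mi n)) (a : mi n) : A :=
  \sum_(c <- lowerset a | P c) m (lam c) (x (msub a c)).

Lemma delta_twist_sum lam (P : pred (mi n)) a i : inI d a ->
  (forall c, mle c a -> P c -> is_const delta (lam c)) ->
  delta i (twist_sum lam P a) =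
  if (0 < a i)%N then twist_sum lam P (mupd a i (a i).-1) else 0.
Proof.
move=> Ia lam_const; rewrite /twist_sum derivation_sum //.
have step c : c \in lowerset a -> P c -> delta i (m (lam c) (x (msub a c))) =
    if (c i < a i)%N then m (lam c) (x (msub (mupd a i (a i).-1) c)) else 0.
  rewrite mem_lowerset => ca Pc; rewrite hm_const; last exact: lam_const.
  rewrite hx ?(inI_mle Ia) ?mle_msub // {1}ffunE subn_gt0.
  by case: ifP => [/msub_mupd_pred ->|_] //; rewrite hm0.
case: (posnP (a i)) => [ai0|ai_gt0].
  by rewrite big_seq_cond big1 // => c /andP[ca Pc]; rewrite step // ai0.
rewrite -(perm_big _ (perm_lowerset_mle (@mle_mupd _ a i _ (leq_pred _)))).
rewrite [RHS]big_filter_cond [RHS]big_mkcondl [LHS]big_seq_cond [RHS]big_seq_cond.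
apply: eq_bigr => c /andP[ca Pc].
by rewrite step // mle_mupd_pred //; move: ca; rewrite mem_lowerset.
Qed.

Definition twisted_from (x' lam : mi n -> A) : Prop :=
  forall a, inI d a -> a != mzero n -> x' a = x a + twist_sum lam (predC1 (mzero n)) a.

Lemma twist_sum_mzero lam (P : pred (mi n)) :
  P (mzero n) = false -> twist_sum lam P (mzero n) = 0.
Proof.
move=> P0; rewrite /twist_sum big_seq_cond big1 // => c /andP[].
by rewrite mem_lowerset => /mle_mzero ->; rewrite P0.
Qed.

Lemma twisted_step_descent (x' lam : mi n -> A) : x' (mzero n) = 1 ->
  (forall g, inI d g -> g != mzero n -> is_const delta (lam g)) ->
  twisted_from x' lam -> is_step_descent delta d x'.
Proof.
move=> x'0 lam_const x'E i b Ib; have [->|b_neq0] := eqVneq b (mzero n).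
  by rewrite x'0 derivation1 // ffunE ltnn.
case: (hder i) => Dadd _; rewrite x'E // Dadd hx // delta_twist_sum //; last first.
  by move=> c cb c_neq0; apply: lam_const => //; apply: inI_mle cb.
case: (posnP (b i)) => [_|bi_gt0]; first by rewrite addr0.
have [b'0|b'_neq0] := eqVneq (mupd b i (b i).-1) (mzero n).
  by rewrite b'0 twist_sum_mzero /= ?eqxx // x'0 hx0 addr0.
by rewrite x'E ?(inI_mle Ib) ?mle_mupd ?leq_pred.
Qed.

Variable x' : mi n -> A.

Definition proper_lower (a c : mi n) := (c != mzero n) && (c != a).

(* Solving the a-equation for its diagonal term; the fuel k only has to exceed |a|. *)
Fixpoint twist_coef_fuel (k : nat) (a : mi n) : A :=
  if k is k'.+1 then x' a - x a - twist_sum (twist_coef_fuel k') (proper_lower a) a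
  else 0.

Definition twist_coef (a : mi n) : A := twist_coef_fuel (mnorm a).+1 a.

Lemma twist_coef_fuelS k a : twist_coef_fuel k.+1 a =
  x' a - x a - twist_sum (twist_coef_fuel k) (proper_lower a) a.
Proof. by []. Qed.

Lemma twist_coef_fuel_stable K a k1 k2 : (mnorm a < K)%N ->
  (mnorm a < k1)%N -> (mnorm a < k2)%N -> twist_coef_fuel k1 a = twist_coef_fuel k2 a.
Proof.
elim: K a k1 k2 => // K IHK a [|k1] [|k2] // lt_aK lt_ak1 lt_ak2.
rewrite !twist_coef_fuelS /twist_sum; congr (_ - _).
rewrite big_seq_cond [RHS]big_seq_cond; apply: eq_bigr => c /andP[].
rewrite mem_lowerset => ca /andP[_ c_neq_a].
have lt_ca := mnorm_ltn ca c_neq_a.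
by rewrite (IHK c k1 k2) //; lia.
Qed.

Lemma twist_coefE a :
  twist_coef a = x' a - x a - twist_sum twist_coef (proper_lower a) a.
Proof.
rewrite {1}/twist_coef twist_coef_fuelS /twist_sum; congr (_ - _).
rewrite big_seq_cond [RHS]big_seq_cond; apply: eq_bigr => c /andP[].
rewrite mem_lowerset => ca /andP[_ c_neq_a].
have lt_ca := mnorm_ltn ca c_neq_a.
by rewrite /twist_coef (@twist_coef_fuel_stable (mnorm a) c (mnorm a) (mnorm c).+1) //; lia.
Qed.

Lemma twist_sum_split a : a != mzero n ->
  twist_sum twist_coef (predC1 (mzero n)) a =
  twist_coef a + twist_sum twist_coef (proper_lower a) a.
Proof.
move=> a_neq0; rewrite /twist_sum -big_filter (bigD1_seq a) /=; last first.
- exact: filter_uniq (lowerset_uniq a).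
- by rewrite mem_filter /= a_neq0 mem_lowerset mle_refl.
by rewrite msubxx hx0 hm1 big_filter_cond.
Qed.

Lemma twisted_from_twist_coef : twisted_from x' twist_coef.
Proof. by move=> a _ a_neq0; rewrite twist_sum_split // twist_coefE subrK addrC subrK. Qed.

(* Induction on |a|: the coefficients below a are already constants, so
   delta_i of the a-equation is the (a - e_i)-equation plus delta_i lam_a. *)
Lemma twist_coef_const : x' (mzero n) = 1 -> is_step_descent delta d x' ->
  forall a, inI d a -> a != mzero n -> is_const delta (twist_coef a).
Proof.
move=> x'0 hx' a; elim: (mnorm a).+1 {-2}a (ltnSn (mnorm a)) => // K IHK {}a.
move=> lt_aK Ia a_neq0 i.
have lower_const c : mle c a -> proper_lower a c -> is_const delta (twist_coef c).
  move=> ca /andP[c_neq0 c_neq_a]; have lt_ca := mnorm_ltn ca c_neq_a.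
  by apply: IHK c_neq0; [lia | exact: inI_mle Ia ca].
rewrite twist_coefE !derivationB // delta_twist_sum // hx' // hx //.
case: (posnP (a i)) => [_|ai_gt0]; first by rewrite !subr0.
set a' := mupd a i (a i).-1.
have Ia' : inI d a' := inI_mle Ia (@mle_mupd _ a i _ (leq_pred _)).
have -> : twist_sum twist_coef (proper_lower a) a' =
          twist_sum twist_coef (predC1 (mzero n)) a'.
  rewrite /twist_sum big_seq_cond [RHS]big_seq_cond; apply: eq_bigl => c.
  case ca': (c \in _) => //=; rewrite mem_lowerset in ca'.
  rewrite /proper_lower; suff -> : c != a by rewrite andbT.
  by apply: contraTneq ca' => ->; rewrite mle_mupd_pred ?mle_refl ?ltnn.
have [a'0|a'_neq0] := eqVneq a' (mzero n).
  by rewrite a'0 twist_sum_mzero /= ?eqxx // x'0 hx0 !subrr.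
by rewrite (twisted_from_twist_coef Ia' a'_neq0) [x a' + _]addrC addrK subrr.
Qed.

Lemma descent_twistedP : is_descent delta d x' <->
  x' (mzero n) = 1 /\ exists lam : mi n -> A,
    (forall g, inI d g -> g != mzero n -> is_const delta (lam g)) /\ twisted_from x' lam.
Proof.
rewrite descentP //; split=> [[x'0 hx']|[x'0 [lam [lam_const x'E]]]]; split=> //.
  by exists twist_coef; split; [exact: twist_coef_const | exact: twisted_from_twist_coef].
exact: twisted_step_descent lam_const x'E.
Qed.

End ConstantTwist.

Theorem lemma2p2 (A : pzRingType) (n : nat) (delta : 'I_n -> A -> A)
  (d : 'I_n -> option nat) (x x' : mi n -> A) :
  (forall i, is_derivation (delta i)) ->
  (forall i j a, delta i (delta j a) = delta j (delta i a)) ->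
  is_descent delta d x ->
  (is_descent delta d x' <->
   (x' (mzero n) = 1 /\
    exists lam : mi n -> A,
      (forall g, inI d g -> g != mzero n -> is_const delta (lam g)) /\
      (forall a, inI d a -> a != mzero n ->
         x' a = x a + \sum_(b <- lowerset a | b != mzero n) lam b * x (msub a b))))
  /\
  (is_descent delta d x' <->
   (x' (mzero n) = 1 /\
    exists mu : mi n -> A,
      (forall g, inI d g -> g != mzero n -> is_const delta (mu g)) /\
      (forall a, inI d a -> a != mzero n ->
         x' a = x a + \sum_(b <- lowerset a | b != mzero n) x (msub a b) * mu b))).
Proof.
(* dpow applies the derivations in a fixed order. *)
move=> hder _ /(descentP d x hder) [x0 hx]; split.
- apply: (descent_twistedP (m := fun l z => l * z)) => // [l|l|l z i l_const].
  + exact: mulr0.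
  + exact: mulr1.
  + by case: (hder i) => _ Dmul; rewrite Dmul l_const mul0r add0r.
- apply: (descent_twistedP (m := fun l z => z * l)) => // [l|l|l z i l_const].
  + exact: mul0r.
  + exact: mul1r.
  + by case: (hder i) => _ Dmul; rewrite Dmul l_const mulr0 addr0.
Qed.
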